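(* (Explicit solutions of the Lotka–Volterra lattice.) Let $M,N\ge1$. Let $\tilde P$ be an invertible $N\times N$ complex matrix, $\tilde R$ an $N\times N$ complex matrix, $U$ an $M\times 1$ and $V$ an $N\times1$ complex vector, and put $Q=VU^T$ ($N\times M$). Let $A,B$ be $N\times N$ and $C,D$ be $M\times N$ complex matrices satisfying $$QC+\tilde RA=-A\tilde P^{-1},\qquad QD+\tilde RB=-B\tilde P .$$ For $n\in\mathbb{Z}$ and $t$ in an interval, define $$\tilde X_n(t)=A+B\tilde P^{\,n}e^{t(\tilde P^{-1}-\tilde P)},\qquad Y_n(t)=C+D\tilde P^{\,n}e^{t(\tilde P^{-1}-\tilde P)},$$ and assume $\tilde X_n(t)$ is invertible for all $n$ and $t$. Set $\varphi_n=U^T Y_n\tilde X_n^{-1}V$ and $a_n=\varphi_{n+1}-\varphi_n-1$. Then $a_n$ solves the Lotka–Volterra lattice equation $$\frac{d a_n}{dt}=a_{n+1}a_n-a_n a_{n-1}\qquad (n\in\mathbb{Z}).$$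
   Context: $U^T$ denotes the transpose of $U$; $\tilde P^{\,n}$ is the $n$-th power of $\tilde P$ (negative powers via $\tilde P^{-1}$), and $e^{(\cdot)}$ is the matrix exponential. Note that $\tilde P^{\,n}$ and $e^{t(\tilde P^{-1}-\tilde P)}$ commute. *)

From Stdlib Require Import Reals ZArith.
Open Scope R_scope.

Record Cplx := mkC { re : R; im : R }.
Definition C0 : Cplx := mkC 0 0.
Definition C1 : Cplx := mkC 1 0.
Definition Cr (x : R) : Cplx := mkC x 0.
Definition Cadd (a b : Cplx) : Cplx := mkC (re a + re b) (im a + im b).
Definition Copp (a : Cplx) : Cplx := mkC (- re a) (- im a).
Definition Csub (a b : Cplx) : Cplx := Cadd a (Copp b).
Definition Cmul (a b : Cplx) : Cplx :=
  mkC (re a * re b - im a * im b) (re a * im b + im a * re b).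

Fixpoint csum (k : nat) (f : nat -> Cplx) : Cplx :=
  match k with O => C0 | S k' => Cadd (csum k' f) (f k') end.

(* Matrices: entries indexed by (row, column); only entries with indices
   below the relevant dimensions matter. *)
Definition mat := nat -> nat -> Cplx.
Definition madd (A B : mat) : mat := fun i j => Cadd (A i j) (B i j).
Definition mopp (A : mat) : mat := fun i j => Copp (A i j).
Definition mscal (c : Cplx) (A : mat) : mat := fun i j => Cmul c (A i j).
Definition mmul (k : nat) (A B : mat) : mat :=
  fun i j => csum k (fun l => Cmul (A i l) (B l j)).
Definition mid : mat := fun i j => if Nat.eqb i j then C1 else C0.
Definition mtr (A : mat) : mat := fun i j => A j i.
Definition meq (m n : nat) (A B : mat) : Prop :=
  forall i j, (i < m)%nat -> (j < n)%nat -> A i j = B i j.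
Definition is_inverse (n : nat) (A Ainv : mat) : Prop :=
  meq n n (mmul n A Ainv) mid /\ meq n n (mmul n Ainv A) mid.

Fixpoint mpow (n : nat) (K : mat) (m : nat) : mat :=
  match m with O => mid | S m' => mmul n K (mpow n K m') end.
Definition mpowZ (n : nat) (P Pinv : mat) (z : Z) : mat :=
  match z with
  | Z0 => mid
  | Zpos p => mpow n P (Pos.to_nat p)
  | Zneg p => mpow n Pinv (Pos.to_nat p)
  end.

Fixpoint exp_partial (n : nat) (K : mat) (k : nat) : mat :=
  match k with
  | O => fun _ _ => C0
  | S k' => madd (exp_partial n K k')
                 (mscal (Cr (/ INR (fact k'))) (mpow n K k'))
  end.
Definition is_mexp (n : nat) (K E : mat) : Prop :=
  forall i j, (i < n)%nat -> (j < n)%nat ->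
    Un_cv (fun k => re (exp_partial n K k i j)) (re (E i j)) /\
    Un_cv (fun k => im (exp_partial n K k i j)) (im (E i j)).

Definition cderiv (f : R -> Cplx) (t : R) (l : Cplx) : Prop :=
  derivable_pt_lim (fun s => re (f s)) t (re l) /\
  derivable_pt_lim (fun s => im (f s)) t (im l).

(* X_n(t) = A + B P^n E(t), Y_n(t) = C + D P^n E(t), with E(t) = e^{t(P^-1 - P)} *)
Definition Xmat (N : nat) (A B P Pinv : mat) (E : R -> mat) (n : Z) (t : R) : mat :=
  madd A (mmul N B (mmul N (mpowZ N P Pinv n) (E t))).
Definition Ymat (N : nat) (Cm D P Pinv : mat) (E : R -> mat) (n : Z) (t : R) : mat :=
  madd Cm (mmul N D (mmul N (mpowZ N P Pinv n) (E t))).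
(* phi_n = U^T Y_n X_n^{-1} V  (a 1 x 1 matrix, read as a scalar) *)
Definition phi (M N : nat) (U V Cm D P Pinv : mat) (E : R -> mat)
  (Xinv : Z -> R -> mat) (n : Z) (t : R) : Cplx :=
  mmul M (mtr U) (mmul N (Ymat N Cm D P Pinv E n t) (mmul N (Xinv n t) V)) 0%nat 0%nat.
Definition aseq (M N : nat) (U V Cm D P Pinv : mat) (E : R -> mat)
  (Xinv : Z -> R -> mat) (n : Z) (t : R) : Cplx :=
  Csub (Csub (phi M N U V Cm D P Pinv E Xinv (n + 1)%Z t)
             (phi M N U V Cm D P Pinv E Xinv n t)) C1.

(* Write T = P^-1, K_n(t) = P^n e^{t(T - P)}, X_n = A + B K_n,
   Y_n = C + D K_n, w_n = U^T Y_n, phi_n = w_n X_n^-1 V and tau_n = det X_n.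

   1. Calculus: d/dt e^{tK} = K e^{tK} (term-by-term differentiation of the
      exponential series), hence K_n' = K_{n-1} - K_{n+1} and
      X_n' = X_{n-1} - X_{n+1}.
   2. The constraints QC + RA = -AT and QD + RB = -BP give the linear relations
      R X_n + V w_n = -X_{n+2} T  and  X_{n+1}(1 + T) = X_n + X_{n+2} T,
      so X_n' = R X_n + X_n T + V w_n; Jacobi's formula then yields
      tau_n' = tau_n (tr R + tr T + phi_n).
   3. Bilinear identity: M_n = -X_{n+2} T X_n^-1 = R + V w_n X_n^-1 differs from
      M_{n-1} by a rank-one matrix; the matrix determinant lemma gives
      tau_{n+2} tau_{n-1} = -a_n tau_{n+1} tau_n.
   4. So a_n = -tau_{n+2} tau_{n-1} / (tau_{n+1} tau_n), whose logarithmic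
      derivative is, by 2., phi_{n+2} + phi_{n-1} - phi_{n+1} - phi_n
      = a_{n+1} - a_{n-1}: this is the Lotka-Volterra equation. *)

From Stdlib Require Import Reals ZArith Lia Lra Field Ring ClassicalEpsilon FunctionalExtensionality.
From HB Require Import structures.
From mathcomp Require all_boot all_algebra ring.
Open Scope R_scope.

Lemma Cext (a b : Cplx) : re a = re b -> im a = im b -> a = b.
Proof. destruct a, b; simpl; intros; subst; reflexivity. Qed.

Definition Cinv (z : Cplx) : Cplx :=
  mkC (re z / (re z * re z + im z * im z)) (- im z / (re z * re z + im z * im z)).
Definition Cdiv (a b : Cplx) : Cplx := Cmul a (Cinv b).

Lemma Cring_th : ring_theory C0 C1 Cadd Cmul Csub Copp (@eq Cplx).
Proof. constructor; intros; apply Cext; simpl; ring. Qed.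

Lemma C1_neq_C0 : C1 <> C0.
Proof. intro H. injection H. lra. Qed.

Lemma Cnorm_pos (z : Cplx) : z <> C0 -> 0 < re z * re z + im z * im z.
Proof.
  intros H. destruct z as [a b]; simpl.
  destruct (Rle_lt_dec (a * a + b * b) 0) as [Hle|Hlt]; [|exact Hlt].
  exfalso; apply H.
  assert (a = 0) by nra. assert (b = 0) by nra. subst; reflexivity.
Qed.

Lemma Cfield_th : field_theory C0 C1 Cadd Cmul Csub Copp Cdiv Cinv (@eq Cplx).
Proof.
  constructor.
  - exact Cring_th.
  - exact C1_neq_C0.
  - reflexivity.
  - intros p Hp. pose proof (Cnorm_pos p Hp). apply Cext; simpl; field; lra.
Qed.

Add Field Cfield : Cfield_th.

Lemma Cmul_neq0 (a b : Cplx) : a <> C0 -> b <> C0 -> Cmul a b <> C0.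
Proof.
  intros Ha Hb H. apply Ha.
  assert (E : a = Cmul (Cmul a b) (Cinv b)) by (field; exact Hb).
  rewrite E, H. apply Cext; simpl; ring.
Qed.

Lemma dlim_eq f t a b : a = b -> derivable_pt_lim f t a -> derivable_pt_lim f t b.
Proof. intros ->; auto. Qed.

Lemma cderiv_eq f t a b : a = b -> cderiv f t a -> cderiv f t b.
Proof. intros ->; auto. Qed.

Lemma cderiv_ext f g t a : (forall s, f s = g s) -> cderiv f t a -> cderiv g t a.
Proof.
  intros H [H1 H2]; split; eapply derivable_pt_lim_ext; try eassumption;
    intros; simpl; rewrite H; reflexivity.
Qed.

Lemma cderiv_loc f g t a b l : a < t < b -> (forall z, a < z < b -> f z = g z) ->
  cderiv f t l -> cderiv g t l.
Proof.
  intros Ht H [H1 H2]; split; eapply derivable_pt_lim_locally_ext; try eassumption;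
    intros z Hz; simpl; rewrite H; auto.
Qed.

Lemma cderiv_const c t : cderiv (fun _ => c) t C0.
Proof. split; simpl; apply derivable_pt_lim_const. Qed.

Lemma cderiv_add f g t a b : cderiv f t a -> cderiv g t b ->
  cderiv (fun s => Cadd (f s) (g s)) t (Cadd a b).
Proof. intros [H1 H2] [H3 H4]; split; simpl; apply derivable_pt_lim_plus; auto. Qed.

Lemma cderiv_opp f t a : cderiv f t a -> cderiv (fun s => Copp (f s)) t (Copp a).
Proof. intros [H1 H2]; split; simpl; apply derivable_pt_lim_opp; auto. Qed.

Lemma cderiv_mul f g t a b : cderiv f t a -> cderiv g t b ->
  cderiv (fun s => Cmul (f s) (g s)) t (Cadd (Cmul a (g t)) (Cmul (f t) b)).
Proof.
  intros [H1 H2] [H3 H4]; split; simpl.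
  - eapply dlim_eq; [|apply derivable_pt_lim_minus; apply derivable_pt_lim_mult; eassumption].
    simpl; ring.
  - eapply dlim_eq; [|apply derivable_pt_lim_plus; apply derivable_pt_lim_mult; eassumption].
    simpl; ring.
Qed.

Lemma cderiv_inv f t a : f t <> C0 -> cderiv f t a ->
  cderiv (fun s => Cinv (f s)) t (Copp (Cmul a (Cinv (Cmul (f t) (f t))))).
Proof.
  intros Hf [H1 H2].
  pose proof (Cnorm_pos _ Hf) as Hn.
  assert (Hd : derivable_pt_lim (fun s => re (f s) * re (f s) + im (f s) * im (f s)) t
     (re a * re (f t) + re (f t) * re a + (im a * im (f t) + im (f t) * im a))).
  { apply derivable_pt_lim_plus; apply derivable_pt_lim_mult; auto. }
  assert (Hz : re (f t) * re (f t) + im (f t) * im (f t) <> 0) by lra.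
  assert (Hz2 : (re (f t) * re (f t) - im (f t) * im (f t)) *
                (re (f t) * re (f t) - im (f t) * im (f t)) +
                (re (f t) * im (f t) + im (f t) * re (f t)) *
                (re (f t) * im (f t) + im (f t) * re (f t)) <> 0)
    by (intro HH; apply Hz; nra).
  unfold Cinv; split; simpl.
  - eapply dlim_eq; [|apply derivable_pt_lim_div; [exact H1|exact Hd|simpl; lra]].
    unfold Rsqr. field. split; assumption.
  - eapply dlim_eq;
      [|apply derivable_pt_lim_div; [apply derivable_pt_lim_opp; exact H2|exact Hd|simpl; lra]].
    unfold Rsqr. field. split; assumption.
Qed.

(* Logarithmic derivative of a quotient of tau-functions: if f_k' = f_k (c + g_k)
   for k = 2, m, 1, 0, then -(f_2 f_m)/(f_1 f_0) has logarithmic derivative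
   g_2 + g_m - g_1 - g_0 (the common part c cancels). *)
Lemma cderiv_tau_quotient (f2 fm f1 f0 : R -> Cplx) (c g2 gm g1 g0 : Cplx) t :
  f1 t <> C0 -> f0 t <> C0 ->
  cderiv f2 t (Cmul (f2 t) (Cadd c g2)) -> cderiv fm t (Cmul (fm t) (Cadd c gm)) ->
  cderiv f1 t (Cmul (f1 t) (Cadd c g1)) -> cderiv f0 t (Cmul (f0 t) (Cadd c g0)) ->
  cderiv (fun s => Cmul (Copp (Cmul (f2 s) (fm s))) (Cinv (Cmul (f1 s) (f0 s)))) t
    (Cmul (Cmul (Copp (Cmul (f2 t) (fm t))) (Cinv (Cmul (f1 t) (f0 t))))
          (Csub (Cadd g2 gm) (Cadd g1 g0))).
Proof.
  intros H1 H0 D2 Dm D1 D0.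
  assert (H10 : Cmul (f1 t) (f0 t) <> C0) by (apply Cmul_neq0; assumption).
  eapply cderiv_eq;
    [|apply cderiv_mul;
      [apply cderiv_opp, cderiv_mul; eassumption
      |apply cderiv_inv; [exact H10|apply cderiv_mul; eassumption]]].
  cbv beta. field. split; assumption.
Qed.

Lemma csum_ext k f g : (forall l, (l < k)%nat -> f l = g l) -> csum k f = csum k g.
Proof. induction k; simpl; intros H; auto. rewrite IHk, H; auto. Qed.

Lemma csum_scal k c f : csum k (fun l => Cmul c (f l)) = Cmul c (csum k f).
Proof. induction k; simpl; [|rewrite IHk]; apply Cext; simpl; ring. Qed.

Lemma csum_add k f g : csum k (fun l => Cadd (f l) (g l)) = Cadd (csum k f) (csum k g).
Proof. induction k; simpl; [|rewrite IHk]; apply Cext; simpl; ring. Qed.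

Definition ccv (u : nat -> Cplx) (l : Cplx) : Prop :=
  Un_cv (fun k => re (u k)) (re l) /\ Un_cv (fun k => im (u k)) (im l).

Lemma ccv_const c : ccv (fun _ => c) c.
Proof.
  split; intros e He; exists 0%nat; intros; unfold Rdist; rewrite Rminus_diag, Rabs_R0; lra.
Qed.

Lemma ccv_add u v a b : ccv u a -> ccv v b -> ccv (fun k => Cadd (u k) (v k)) (Cadd a b).
Proof. intros [H1 H2] [H3 H4]; split; simpl; apply CV_plus; auto. Qed.

Lemma ccv_mul u v a b : ccv u a -> ccv v b -> ccv (fun k => Cmul (u k) (v k)) (Cmul a b).
Proof.
  intros [H1 H2] [H3 H4]; split; simpl.
  - apply CV_minus; apply CV_mult; auto.
  - apply CV_plus; apply CV_mult; auto.
Qed.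

Lemma ccv_ext u v a : (forall k, v k = u k) -> ccv u a -> ccv v a.
Proof.
  intros H [H1 H2]; split; eapply Un_cv_ext; try eassumption; intros k; simpl; rewrite H; reflexivity.
Qed.

Lemma ccv_unique u a b : ccv u a -> ccv u b -> a = b.
Proof. intros [H1 H2] [H3 H4]; apply Cext; eapply UL_sequence; eauto. Qed.

Lemma ccv_csum n (F : nat -> nat -> Cplx) (G : nat -> Cplx) :
  (forall l, (l < n)%nat -> ccv (fun k => F k l) (G l)) ->
  ccv (fun k => csum n (F k)) (csum n G).
Proof. induction n; intros H; simpl; [apply ccv_const|apply ccv_add; auto]. Qed.

Lemma ccv_mmul_l N K (F : nat -> mat) G i j :
  (forall l, (l < N)%nat -> ccv (fun k => F k l j) (G l j)) ->
  ccv (fun k => mmul N K (F k) i j) (mmul N K G i j).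
Proof. intros H. apply ccv_csum. intros l Hl. apply ccv_mul; [apply ccv_const|auto]. Qed.

Lemma ccv_mmul_r N K (F : nat -> mat) G i j :
  (forall l, (l < N)%nat -> ccv (fun k => F k i l) (G i l)) ->
  ccv (fun k => mmul N (F k) K i j) (mmul N G K i j).
Proof. intros H. apply ccv_csum. intros l Hl. apply ccv_mul; [auto|apply ccv_const]. Qed.

Definition nC (z : Cplx) : R := Rabs (re z) + Rabs (im z).

Lemma nC_pos z : 0 <= nC z.
Proof. unfold nC; pose proof (Rabs_pos (re z)); pose proof (Rabs_pos (im z)); lra. Qed.

Lemma nC_add a b : nC (Cadd a b) <= nC a + nC b.
Proof.
  unfold nC; simpl. pose proof (Rabs_triang (re a) (re b)); pose proof (Rabs_triang (im a) (im b)); lra.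
Qed.

Lemma nC_mul a b : nC (Cmul a b) <= nC a * nC b.
Proof.
  unfold nC; simpl.
  pose proof (Rabs_triang (re a * re b) (- (im a * im b))).
  pose proof (Rabs_triang (re a * im b) (im a * re b)).
  rewrite Rabs_Ropp in H. rewrite !Rabs_mult in *.
  pose proof (Rabs_pos (re a)); pose proof (Rabs_pos (re b));
  pose proof (Rabs_pos (im a)); pose proof (Rabs_pos (im b)).
  unfold Rminus. nra.
Qed.

Fixpoint RS (k : nat) (f : nat -> R) : R := match k with O => 0 | S k' => RS k' f + f k' end.

Lemma RS_ge0 k f : (forall l, 0 <= f l) -> 0 <= RS k f.
Proof. induction k; simpl; intros; [lra|]. pose proof (H k); pose proof (IHk H); lra. Qed.

Lemma RS_le k f g : (forall l, (l < k)%nat -> f l <= g l) -> RS k f <= RS k g.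
Proof.
  induction k; simpl; intros H; [lra|].
  pose proof (H k ltac:(lia)). pose proof (IHk ltac:(intros; apply H; lia)). lra.
Qed.

Lemma RS_elem k f i : (forall l, 0 <= f l) -> (i < k)%nat -> f i <= RS k f.
Proof.
  induction k; simpl; intros H Hi; [lia|].
  destruct (Nat.eq_dec i k) as [->|Hne].
  - pose proof (RS_ge0 k f H); lra.
  - pose proof (IHk H ltac:(lia)); pose proof (H k); lra.
Qed.

Lemma RS_scal k c f : RS k (fun l => f l * c) = RS k f * c.
Proof. induction k; simpl; [ring|rewrite IHk; ring]. Qed.

Lemma nC_csum k f : nC (csum k f) <= RS k (fun l => nC (f l)).
Proof.
  induction k; simpl.
  - unfold nC; simpl; rewrite Rabs_R0; lra.
  - pose proof (nC_add (csum k f) (f k)); lra.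
Qed.

Lemma mpow_bound N K m i j : (i < N)%nat -> (j < N)%nat ->
  nC (mpow N K m i j) <= (RS N (fun a => RS N (fun b => nC (K a b)))) ^ m.
Proof.
  revert i j; induction m; intros i j Hi Hj; simpl.
  - unfold mid; destruct (Nat.eqb i j); unfold nC; simpl; rewrite ?Rabs_R1, ?Rabs_R0; lra.
  - set (L := RS N (fun a => RS N (fun b => nC (K a b)))).
    unfold mmul. eapply Rle_trans; [apply nC_csum|].
    eapply Rle_trans.
    { apply (RS_le _ _ (fun l => nC (K i l) * L ^ m)). intros l Hl.
      eapply Rle_trans; [apply nC_mul|]. apply Rmult_le_compat_l; [apply nC_pos|]. apply IHm; auto. }
    rewrite RS_scal. apply Rmult_le_compat_r.
    + apply pow_le. apply RS_ge0; intros; apply RS_ge0; intros; apply nC_pos.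
    + apply (RS_elem N (fun a => RS N (fun b => nC (K a b)))); auto.
      intros; apply RS_ge0; intros; apply nC_pos.
Qed.

Fixpoint ps (c : nat -> R) (k : nat) (x : R) : R :=
  match k with O => 0 | S k' => ps c k' x + / INR (fact k') * (x ^ k' * c k') end.

Lemma ps_deriv c k t :
  derivable_pt_lim (ps c (S k)) t (ps (fun m => c (S m)) k t).
Proof.
  induction k as [|k IH].
  - simpl. eapply derivable_pt_lim_ext; [|apply (derivable_pt_lim_const (0 + / 1 * (1 * c 0%nat)))].
    intros; reflexivity.
  - change (ps c (S (S k))) with
      (fun x => ps c (S k) x + / INR (fact (S k)) * (x ^ (S k) * c (S k))).
    eapply dlim_eq; [|apply derivable_pt_lim_plus; [exact IH|]].
    2:{ apply (derivable_pt_lim_ext (fun x => / INR (fact (S k)) * c (S k) * x ^ (S k))).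
        - intros; ring.
        - apply derivable_pt_lim_mult; [apply derivable_pt_lim_const|apply derivable_pt_lim_pow]. }
    simpl ps. simpl pred. rewrite fact_simpl, mult_INR.
    assert (H1 : INR (fact k) <> 0) by (apply INR_fact_neq_0).
    assert (H2 : INR (S k) <> 0) by (apply not_0_INR; lia).
    field. auto.
Qed.

Lemma ps_SP c n x : ps c (S n) x = SP (fun m y => / INR (fact m) * (y ^ m * c m)) n x.
Proof. unfold SP. induction n as [|n IH]; simpl in *; [ring|rewrite IH; reflexivity]. Qed.

(* With geometrically bounded coefficients, the derived series converges
   normally on every ball centred at 0 (it is dominated by L e^{rL}). *)
Lemma derived_pser_CVN (c : nat -> R) (L : R) (r : posreal) :
  0 <= L -> (forall m, Rabs (c m) <= L ^ m) ->
  CVN_r (fun m y => / INR (fact m) * (y ^ m * c (S m))) r.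
Proof.
  intros HL Hc.
  exists (fun k => L * (/ INR (fact k) * (r * L) ^ k)).
  destruct (exist_exp (r * L)) as [l Hl].
  exists (L * l). split.
  - assert (Hu : Un_cv (fun n => L * sum_f_R0 (fun i => / INR (fact i) * (r * L) ^ i) n) (L * l)).
    { apply CV_mult; [apply (ccv_const (Cr L))|exact Hl]. }
    intros e He. destruct (Hu e He) as [N0 HN]. exists N0. intros n Hn.
    replace (sum_f_R0 (fun k => Rabs (L * (/ INR (fact k) * (r * L) ^ k))) n)
      with (L * sum_f_R0 (fun i => / INR (fact i) * (r * L) ^ i) n) by
      (rewrite scal_sum; apply sum_eq; intros i _; rewrite Rabs_right; [ring|];
       apply Rle_ge; apply Rmult_le_pos; auto; apply Rmult_le_pos;
       [left; apply Rinv_0_lt_compat, INR_fact_lt_0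
       |apply pow_le; apply Rmult_le_pos; auto; left; apply cond_pos]).
    apply HN; auto.
  - intros n y Hy. unfold Boule in Hy. rewrite Rminus_0_r in Hy.
    rewrite Rabs_mult, Rabs_mult, <- RPow_abs.
    rewrite Rabs_right by (left; apply Rinv_0_lt_compat, INR_fact_lt_0).
    rewrite Rpow_mult_distr.
    assert (H1 : Rabs y ^ n <= r ^ n) by (apply pow_incr; split; [apply Rabs_pos|lra]).
    assert (H2 : Rabs (c (S n)) <= L * L ^ n) by apply Hc.
    assert (0 < / INR (fact n)) by (apply Rinv_0_lt_compat, INR_fact_lt_0).
    assert (0 <= Rabs y ^ n) by (apply pow_le, Rabs_pos).
    assert (0 <= L ^ n) by (apply pow_le; auto).
    assert (Hp : Rabs y ^ n * Rabs (c (S n)) <= r ^ n * (L * L ^ n))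
      by (apply Rmult_le_compat; auto; apply Rabs_pos).
    nra.
Qed.

Lemma pser_deriv (c : nat -> R) (L : R) (g g' : R -> R) :
  0 <= L -> (forall m, Rabs (c m) <= L ^ m) ->
  (forall x, Un_cv (fun k => ps c k x) (g x)) ->
  (forall x, Un_cv (fun k => ps (fun m => c (S m)) k x) (g' x)) ->
  forall t, derivable_pt_lim g t (g' t).
Proof.
  intros HL Hc Hg Hg' t.
  set (fn := fun m y => / INR (fact m) * (y ^ m * c (S m))).
  set (r := mkposreal (Rabs t + 1) ltac:(pose proof (Rabs_pos t); lra)).
  assert (Hfn : forall x, Un_cv (fun N => SP fn N x) (g' x)).
  { intros x eps Heps. destruct (Hg' x eps Heps) as [N0 HN].
    exists N0. intros n Hn. unfold fn; rewrite <- ps_SP. apply HN. lia. }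
  assert (cv : forall x, {l | Un_cv (fun N => SP fn N x) l}) by (intros x; exists (g' x); auto).
  apply (CVU_derivable (fun n => ps c (S (S n))) (fun n => SP fn n) g g' 0 r).
  - eapply CVU_ext_lim; [exact (CVN_CVU fn cv r (derived_pser_CVN c L r HL Hc))|].
    intros x _. unfold SFL. destruct (cv x) as [l Hl]. eapply UL_sequence; [exact Hl|apply Hfn].
  - intros x _ eps Heps. destruct (Hg x eps Heps) as [N0 HN]. exists N0. intros n Hn. apply HN. lia.
  - intros n x _. unfold fn. eapply dlim_eq; [|apply ps_deriv]. apply ps_SP.
  - unfold Boule; simpl. rewrite Rminus_0_r. lra.
Qed.

Fixpoint cps (c : nat -> Cplx) (k : nat) (x : R) : Cplx :=
  match k with
  | O => C0
  | S k' => Cadd (cps c k' x) (Cmul (Cr (/ INR (fact k') * x ^ k')) (c k'))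
  end.

Lemma re_cps c k x : re (cps c k x) = ps (fun m => re (c m)) k x.
Proof. induction k; simpl; [reflexivity|rewrite IHk; ring]. Qed.

Lemma im_cps c k x : im (cps c k x) = ps (fun m => im (c m)) k x.
Proof. induction k; simpl; [reflexivity|rewrite IHk; ring]. Qed.

Lemma cpser_deriv (c : nat -> Cplx) (L : R) (g g' : R -> Cplx) :
  0 <= L -> (forall m, nC (c m) <= L ^ m) ->
  (forall x, ccv (fun k => cps c k x) (g x)) ->
  (forall x, ccv (fun k => cps (fun m => c (S m)) k x) (g' x)) ->
  forall t, cderiv g t (g' t).
Proof.
  intros HL Hc Hg Hg' t. split.
  - apply (pser_deriv (fun m => re (c m)) L (fun s => re (g s)) (fun s => re (g' s))); auto.
    + intros m. eapply Rle_trans; [|apply Hc]. unfold nC; pose proof (Rabs_pos (im (c m))); lra.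
    + intros x. eapply Un_cv_ext; [|exact (proj1 (Hg x))]. intros; apply re_cps.
    + intros x. eapply Un_cv_ext; [|exact (proj1 (Hg' x))]. intros; apply re_cps.
  - apply (pser_deriv (fun m => im (c m)) L (fun s => im (g s)) (fun s => im (g' s))); auto.
    + intros m. eapply Rle_trans; [|apply Hc]. unfold nC; pose proof (Rabs_pos (re (c m))); lra.
    + intros x. eapply Un_cv_ext; [|exact (proj2 (Hg x))]. intros; apply im_cps.
    + intros x. eapply Un_cv_ext; [|exact (proj2 (Hg' x))]. intros; apply im_cps.
Qed.

Lemma mpow_scal N t K m i j :
  mpow N (mscal (Cr t) K) m i j = Cmul (Cr (t ^ m)) (mpow N K m i j).
Proof.
  revert i j; induction m; intros i j; simpl.
  - apply Cext; simpl; ring.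
  - unfold mmul. rewrite <- csum_scal. apply csum_ext. intros l _. rewrite IHm.
    unfold mscal. apply Cext; simpl; ring.
Qed.

Lemma exp_partial_cps N t K k i j :
  exp_partial N (mscal (Cr t) K) k i j = cps (fun m => mpow N K m i j) k t.
Proof.
  induction k; [reflexivity|].
  cbn [exp_partial cps]. unfold madd. rewrite IHk.
  unfold mscal at 1. rewrite mpow_scal. apply Cext; simpl; ring.
Qed.

Lemma mul_exp_partial_cps N t K k i j :
  mmul N K (exp_partial N (mscal (Cr t) K) k) i j = cps (fun m => mpow N K (S m) i j) k t.
Proof.
  induction k; cbn [exp_partial cps].
  - unfold mmul. rewrite (csum_ext N _ (fun l => Cmul C0 C0)) by (intros; apply Cext; simpl; ring).
    rewrite csum_scal. apply Cext; simpl; ring.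
  - rewrite <- IHk. cbn [mpow]. unfold mmul, madd. cbv beta.
    rewrite <- csum_scal, <- csum_add. apply csum_ext. intros l _.
    unfold mscal at 2. rewrite mpow_scal. apply Cext; simpl; ring.
Qed.

Lemma mexp_deriv N K (E : R -> mat) :
  (forall t, is_mexp N (mscal (Cr t) K) (E t)) ->
  forall t i j, (i < N)%nat -> (j < N)%nat ->
  cderiv (fun s => E s i j) t (mmul N K (E t) i j).
Proof.
  intros HE t i j Hi Hj.
  apply (cpser_deriv (fun m => mpow N K m i j) (RS N (fun a => RS N (fun b => nC (K a b))))
           (fun s => E s i j) (fun s => mmul N K (E s) i j));
    [apply RS_ge0; intros; apply RS_ge0; intros; apply nC_pos
    |intros; apply mpow_bound; auto
    |intros x; apply (ccv_ext (fun k => exp_partial N (mscal (Cr x) K) k i j));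
     [intros; symmetry; apply exp_partial_cps|exact (HE x i j Hi Hj)]
    |intros x; apply (ccv_ext (fun k => mmul N K (exp_partial N (mscal (Cr x) K) k) i j));
     [intros; symmetry; apply mul_exp_partial_cps|]].
  apply ccv_mmul_l. intros l Hl. exact (HE x l j Hl Hj).
Qed.

Set Warnings "-notation-overridden,-ambiguous-paths,-notation-incompatible-prefix,-redundant-canonical-projection".

Module LotkaVolterra.
Import all_boot all_algebra.
Import GRing.Theory.

Definition Ceqb (a b : Cplx) : bool :=
  if Req_EM_T (re a) (re b) then (if Req_EM_T (im a) (im b) then true else false) else false.

Lemma Ceqb_axiom : eq_axiom Ceqb.
Proof.
  intros [a b] [c d]; unfold Ceqb; simpl.
  destruct (Req_EM_T a c) as [->|H1]; destruct (Req_EM_T b d) as [->|H2];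
    constructor; try reflexivity; intro H; injection H; intros; contradiction.
Qed.

HB.instance Definition _ := hasDecEq.Build Cplx Ceqb_axiom.

Definition Cfind (P : pred Cplx) (n : nat) : option Cplx :=
  match excluded_middle_informative (exists x, P x) with
  | left H => Some (proj1_sig (constructive_indefinite_description _ H))
  | right _ => None
  end.

Lemma Cfind_correct P n x : Cfind P n = Some x -> P x.
Proof.
  unfold Cfind. destruct excluded_middle_informative as [H|H]; [|discriminate].
  intros E; injection E; intros <-. exact (proj2_sig (constructive_indefinite_description _ H)).
Qed.

Lemma Cfind_complete (P : pred Cplx) : (exists x, P x) -> exists n, Cfind P n.
Proof.
  intros H; exists 0%nat; unfold Cfind.
  destruct excluded_middle_informative; [reflexivity|contradiction].
Qed.

Lemma Cfind_ext (P Q : pred Cplx) : P =1 Q -> Cfind P =1 Cfind Q.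
Proof.
  intros H. assert (P = Q) by (apply functional_extensionality; exact H). subst. intros n; reflexivity.
Qed.

HB.instance Definition _ := hasChoice.Build Cplx Cfind_correct Cfind_complete Cfind_ext.

Lemma CaddA : associative Cadd. Proof. intros a b c; apply Cext; simpl; ring. Qed.
Lemma CaddC : commutative Cadd. Proof. intros a b; apply Cext; simpl; ring. Qed.
Lemma Cadd0 : left_id C0 Cadd. Proof. intros a; apply Cext; simpl; ring. Qed.
Lemma CaddN : left_inverse C0 Copp Cadd. Proof. intros a; apply Cext; simpl; ring. Qed.
HB.instance Definition _ := GRing.isZmodule.Build Cplx CaddA CaddC Cadd0 CaddN.

Lemma CmulA : associative Cmul. Proof. intros a b c; apply Cext; simpl; ring. Qed.
Lemma CmulC : commutative Cmul. Proof. intros a b; apply Cext; simpl; ring. Qed.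
Lemma Cmul1 : left_id C1 Cmul. Proof. intros a; apply Cext; simpl; ring. Qed.
Lemma CmulDl : left_distributive Cmul Cadd. Proof. intros a b c; apply Cext; simpl; ring. Qed.
Lemma C1_neq0 : C1 != C0. Proof. apply/eqP. exact C1_neq_C0. Qed.
HB.instance Definition _ := GRing.Zmodule_isComNzRing.Build Cplx CmulA CmulC Cmul1 CmulDl C1_neq0.

Lemma CmulVf (x : Cplx) : x != 0%R -> (Cinv x * x)%R = 1%R.
Proof. move/eqP=> H. change (Cmul (Cinv x) x = C1). field. exact H. Qed.
Lemma Cinv0 : Cinv 0%R = 0%R.
Proof. apply Cext; simpl; unfold Rdiv; ring. Qed.
HB.instance Definition _ := GRing.ComNzRing_isField.Build Cplx CmulVf Cinv0.

Local Open Scope ring_scope.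

Definition toM m k (A : mat) : 'M[Cplx]_(m, k) := \matrix_(i < m, j < k) A i j.

Lemma toME m k A (i : 'I_m) (j : 'I_k) : toM m k A i j = A i j.
Proof. by rewrite mxE. Qed.

Lemma csum_big k f : csum k f = \sum_(l < k) f l.
Proof. elim: k => [|k IH] /=; [by rewrite big_ord0|by rewrite big_ord_recr /= IH]. Qed.

Lemma toM_mmul m k p A B : toM m p (mmul k A B) = toM m k A *m toM k p B.
Proof. apply/matrixP=> i j; rewrite !mxE /mmul csum_big; apply: eq_bigr => l _; by rewrite !mxE. Qed.
Lemma toM_madd m k A B : toM m k (madd A B) = toM m k A + toM m k B.
Proof. by apply/matrixP=> i j; rewrite !mxE. Qed.
Lemma toM_mopp m k A : toM m k (mopp A) = - toM m k A.
Proof. by apply/matrixP=> i j; rewrite !mxE. Qed.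
Lemma toM_mscal m k c A : toM m k (mscal c A) = c *: toM m k A.
Proof. by apply/matrixP=> i j; rewrite !mxE. Qed.
Lemma toM_mtr m k A : toM m k (mtr A) = (toM k m A)^T.
Proof. by apply/matrixP=> i j; rewrite !mxE. Qed.
Lemma toM_mid m : toM m m mid = 1%:M.
Proof.
  apply/matrixP=> i j; rewrite !mxE /mid.
  case: (PeanoNat.Nat.eqb_spec i j) => H.
  - have -> : i = j by apply: val_inj.
    by rewrite eqxx.
  - case: eqP => [E|_] //. by case: H; rewrite E.
Qed.
Lemma toM_zero m k : toM m k (fun _ _ => C0) = 0.
Proof. by apply/matrixP=> i j; rewrite !mxE. Qed.
Lemma toM_mpow n K m : toM n.+1 n.+1 (mpow n.+1 K m) = (toM n.+1 n.+1 K) ^+ m.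
Proof. elim: m => [|m IH] /=; [by rewrite toM_mid expr0|by rewrite toM_mmul IH exprS]. Qed.

Lemma meq_toM m k A B : meq m k A B <-> toM m k A = toM m k B.
Proof.
  split.
  - move=> H; apply/matrixP=> i j; rewrite !mxE; apply: H; apply/ltP; exact: ltn_ord.
  - move=> H i j /ltP Hi /ltP Hj.
    have := congr1 (fun M : 'M[Cplx]_(m,k) => M (Ordinal Hi) (Ordinal Hj)) H. by rewrite !mxE.
Qed.

Lemma cderiv_addr f g t a b : cderiv f t a -> cderiv g t b ->
  cderiv (fun s => f s + g s) t (a + b).
Proof. exact: cderiv_add. Qed.
Lemma cderiv_mulr f g t a b : cderiv f t a -> cderiv g t b ->
  cderiv (fun s => f s * g s) t (a * g t + f t * b).
Proof. exact: cderiv_mul. Qed.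
Lemma cderiv_constr c t : cderiv (fun _ => c) t 0.
Proof. exact: cderiv_const. Qed.
Lemma cderiv_scal c f t a : cderiv f t a -> cderiv (fun s => c * f s) t (c * a).
Proof.
  move=> H. apply: cderiv_eq; last exact: (cderiv_mulr _ _ _ _ _ (cderiv_constr c t) H).
  by rewrite mul0r add0r.
Qed.

Lemma cderiv_bigsum (I : Type) (r : seq I) (P : pred I) (f : I -> R -> Cplx) (f' : I -> Cplx) t :
  (forall i, P i -> cderiv (f i) t (f' i)) ->
  cderiv (fun s => \sum_(i <- r | P i) f i s) t (\sum_(i <- r | P i) f' i).
Proof.
  move=> H. elim: r => [|x r IH].
  - apply: (cderiv_ext (fun _ => 0)); first by move=> s; rewrite big_nil.
    rewrite big_nil. exact: cderiv_constr.
  - case Px: (P x).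
    + apply: (cderiv_ext (fun s => f x s + \sum_(i <- r | P i) f i s)).
      { by move=> s; rewrite big_cons Px. }
      rewrite big_cons Px. apply: cderiv_addr => //. exact: H.
    + apply: (cderiv_ext (fun s => \sum_(i <- r | P i) f i s)).
      { by move=> s; rewrite big_cons Px. }
      by rewrite big_cons Px.
Qed.

Lemma cderiv_prod n (f : 'I_n -> R -> Cplx) (f' : 'I_n -> Cplx) t :
  (forall i, cderiv (f i) t (f' i)) ->
  cderiv (fun s => \prod_(i < n) f i s) t
    (\sum_(k < n) \prod_(i < n) (if i == k then f' i else f i t)).
Proof.
  elim: n f f' => [|n IH] f f' H.
  - apply: (cderiv_ext (fun _ => 1)); first by move=> s; rewrite big_ord0.
    rewrite big_ord0. exact: cderiv_constr.
  - apply: (cderiv_ext (fun s => (\prod_(i < n) f (widen_ord (leqnSn n) i) s) * f ord_max s)).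
    { by move=> s; rewrite big_ord_recr. }
    apply: cderiv_eq; last first.
    { apply: cderiv_mulr; last exact: H.
      exact: (IH (fun i => f (widen_ord (leqnSn n) i)) (fun i => f' (widen_ord (leqnSn n) i))). }
    have neq_max (k : 'I_n) : (widen_ord (leqnSn n) k == ord_max) = false.
    { apply/negbTE/eqP => /(congr1 val) /= E. by move: (ltn_ord k); rewrite E ltnn. }
    rewrite [in RHS](big_ord_recr n) /= mulr_suml. congr (_ + _).
    + apply: eq_bigr => k _. rewrite (big_ord_recr n) /= eq_sym neq_max. by congr (_ * _).
    + rewrite (big_ord_recr n) /= eqxx. congr (_ * _). apply: eq_bigr => i _. by rewrite neq_max.
Qed.

Definition mderiv m k (F : R -> 'M[Cplx]_(m, k)) t (F' : 'M[Cplx]_(m, k)) : Prop :=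
  forall i j, cderiv (fun s => F s i j) t (F' i j).
Arguments mderiv {m k}.

Lemma mderiv_eq m k (F : R -> 'M[Cplx]_(m, k)) t F1 F2 :
  F1 = F2 -> mderiv F t F1 -> mderiv F t F2.
Proof. by move=> ->. Qed.

Lemma mderiv_const {m k} (A : 'M[Cplx]_(m, k)) t : mderiv (fun _ => A) t 0.
Proof. move=> i j; rewrite mxE; exact: cderiv_constr. Qed.

Lemma mderiv_add m k (F G : R -> 'M[Cplx]_(m, k)) t F' G' :
  mderiv F t F' -> mderiv G t G' -> mderiv (fun s => F s + G s) t (F' + G').
Proof.
  move=> H1 H2 i j. apply: (cderiv_ext (fun s => F s i j + G s i j)); first by move=> s; rewrite mxE.
  rewrite mxE. exact: cderiv_addr.
Qed.

Lemma mderiv_mul m k p (F : R -> 'M[Cplx]_(m, k)) (G : R -> 'M[Cplx]_(k, p)) t F' G' :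
  mderiv F t F' -> mderiv G t G' -> mderiv (fun s => F s *m G s) t (F' *m G t + F t *m G').
Proof.
  move=> H1 H2 i j.
  apply: (cderiv_ext (fun s => \sum_(l < k) F s i l * G s l j)); first by move=> s; rewrite mxE.
  rewrite !mxE -big_split /=. apply: cderiv_bigsum => l _. exact: cderiv_mulr.
Qed.

Lemma mderiv_lmul m k p (A : 'M[Cplx]_(m, k)) (G : R -> 'M[Cplx]_(k, p)) t G' :
  mderiv G t G' -> mderiv (fun s => A *m G s) t (A *m G').
Proof.
  move=> H. have := mderiv_mul _ _ _ _ _ _ _ _ (mderiv_const A t) H.
  by rewrite mul0mx add0r.
Qed.

Definition rowrep n (k : 'I_n) (A B : 'M[Cplx]_n) : 'M[Cplx]_n :=
  \matrix_(i, j) if i == k then B i j else A i j.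
Arguments rowrep {n}.

Lemma det_deriv n (F : R -> 'M[Cplx]_n) t F' :
  mderiv F t F' -> cderiv (fun s => \det (F s)) t (\sum_(k < n) \det (rowrep k (F t) F')).
Proof.
  move=> H. apply: cderiv_eq; last first.
  { apply: cderiv_bigsum => s _. apply: cderiv_scal. apply: cderiv_prod => i. exact: H. }
  under eq_bigr do rewrite mulr_sumr. rewrite exchange_big /=. apply: eq_bigr => k _.
  rewrite /determinant. apply: eq_bigr => s _. congr (_ * _). apply: eq_bigr => i _. by rewrite mxE.
Qed.

Lemma det_rowrep n (A B : 'M[Cplx]_n) k : \det (rowrep k A B) = (B *m \adj A) k k.
Proof.
  rewrite (expand_det_row _ k) mxE. apply: eq_bigr => j _.
  rewrite !mxE eqxx. congr (_ * _). rewrite /cofactor. congr (_ * _). congr (\det _).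
  apply/matrixP=> i l. by rewrite !mxE eq_sym (negbTE (neq_lift k i)).
Qed.

Lemma det_deriv_unit n (F : R -> 'M[Cplx]_n) t F' :
  mderiv F t F' -> F t \in unitmx ->
  cderiv (fun s => \det (F s)) t (\det (F t) * \tr (F' *m invmx (F t))).
Proof.
  move=> H U. apply: cderiv_eq; last exact: det_deriv.
  under eq_bigr do rewrite det_rowrep.
  have -> : \adj (F t) = \det (F t) *: invmx (F t) by rewrite /invmx U scalerA mulfV ?scale1r.
  by rewrite -scalemxAr -mxtraceZ.
Qed.

Lemma det_rank1 n (x : 'M[Cplx]_(n, 1)) (y : 'M[Cplx]_(1, n)) :
  \det (1%:M + x *m y) = 1 + (y *m x) 0 0.
Proof.
  have E1 : block_mx 1%:M 0 y 1%:M *m block_mx 1%:M (-x) 0 (1%:M + y *m x)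
            = block_mx (1%:M : 'M_n) (-x) y (1%:M : 'M_1).
  { rewrite mulmx_block !mul1mx !mul0mx !mulmx1 ?addr0 ?add0r.
    by rewrite mulmxN addrCA addNr addr0. }
  have E2 : block_mx (1%:M + x *m y) (-x) 0 1%:M *m block_mx 1%:M 0 y 1%:M
            = block_mx (1%:M : 'M_n) (-x) y (1%:M : 'M_1).
  { rewrite mulmx_block !mul1mx !mul0mx !mulmx1 ?mulmx0 ?addr0 ?add0r.
    by rewrite mulNmx addrK. }
  have := congr1 determinant (etrans E1 (esym E2)).
  rewrite !det_mulmx (det_lblock (1%:M : 'M[Cplx]_n) y (1%:M : 'M[Cplx]_1)).
  rewrite (det_ublock (1%:M : 'M[Cplx]_n) (-x) (1%:M + y *m x)).
  rewrite (det_ublock (1%:M + x *m y) (-x) (1%:M : 'M[Cplx]_1)) !det1 !mul1r !mulr1.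
  by rewrite det_mx11 !mxE => ->.
Qed.

Import ring.

(* Entrywise normalization: an identity between sums and opposites of matrices
   (treated as atoms) holds as soon as it holds for the corresponding entries in
   the commutative ring [Cplx]. *)
Definition ent {m k} (X : 'M[Cplx]_(m, k)) (i : 'I_m) (j : 'I_k) : Cplx := X i j.
Lemma ent_add m k (X Y : 'M[Cplx]_(m, k)) i j : ent (X + Y) i j = ent X i j + ent Y i j.
Proof. by rewrite /ent mxE. Qed.
Lemma ent_opp m k (X : 'M[Cplx]_(m, k)) i j : ent (- X) i j = - ent X i j.
Proof. by rewrite /ent mxE. Qed.
Lemma ent_zero m k i j : ent (0 : 'M[Cplx]_(m, k)) i j = 0.
Proof. by rewrite /ent mxE. Qed.

Ltac mxlin := let i := fresh "i" in let j := fresh "j" in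
  apply/matrixP => i j;
  match goal with |- fun_of_matrix ?a i j = fun_of_matrix ?b i j => change (ent a i j = ent b i j) end;
  repeat rewrite ?ent_add ?ent_opp ?ent_zero;
  repeat match goal with |- context [ent ?X ?a ?b] =>
    let e := fresh "e" in set e := ent X a b; clearbody e end;
  ring.

Lemma mxE_sub m k (X Y : 'M[Cplx]_(m, k)) i j : (X - Y) i j = X i j - Y i j.
Proof. by rewrite !mxE. Qed.

Ltac mxnorm := repeat rewrite ?mulmxDl ?mulmxDr ?mulmxBl ?mulmxBr ?mulNmx ?mulmxN ?opprK ?mulmxA ?mulmx1 ?mul1mx.

Lemma rank_one_form n (RR T X X' : 'M[Cplx]_n) (V : 'M[Cplx]_(n, 1)) (w : 'M[Cplx]_(1, n)) :
  X \in unitmx -> RR *m X + V *m w = - (X' *m T) ->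
  - (X' *m T *m invmx X) = RR + V *m (w *m invmx X).
Proof.
  move=> HX H. have := congr1 (mulmx^~ (invmx X)) H => /=.
  by rewrite mulmxDl (mulmxK HX) mulNmx -(mulmxA V) => <-.
Qed.

Lemma det_rank1_update n (M0 M1 M1inv : 'M[Cplx]_n) (V : 'M[Cplx]_(n, 1)) (s : 'M[Cplx]_(1, n)) :
  M1 *m M1inv = 1%:M -> M0 = M1 + V *m s ->
  \det M0 = \det M1 * (1 + (s *m (M1inv *m V)) 0 0).
Proof.
  move=> H1 ->.
  have -> : M1 + V *m s = M1 *m (1%:M + (M1inv *m V) *m s).
  { by rewrite mulmxDr mulmx1 !mulmxA H1 mul1mx. }
  by rewrite det_mulmx det_rank1.
Qed.

Lemma cancel_column n (V : 'M[Cplx]_(n, 1)) (c1 c2 : 'M[Cplx]_1) :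
  V *m c1 = V *m c2 -> (V = 0 -> c1 = c2) -> c1 = c2.
Proof.
  move=> H H0. case: (boolP [exists i, V i 0 != 0]) => [/existsP [i Hi]|Hn].
  - have := congr1 (fun M0 : 'M[Cplx]_(n, 1) => M0 i 0) H.
    rewrite !mxE !big_ord1 => /(mulfI Hi) E.
    apply/matrixP => a b. by rewrite !ord1.
  - apply: H0. apply/matrixP => a b. rewrite ord1 mxE.
    apply/eqP. move: Hn. rewrite negb_exists => /forallP /(_ a). by rewrite negbK.
Qed.

Lemma det_shift_quotient n (X X' T : 'M[Cplx]_n) : X \in unitmx ->
  \det (- (X' *m T *m invmx X)) * \det X = (-1) ^+ n * (\det X' * \det T).
Proof.
  move=> HX. by rewrite -det_mulmx mulNmx (mulmxKV HX) -scaleN1r detZ det_mulmx.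
Qed.

Section BilinearIdentity.
Variables (n : nat) (RR T P : 'M[Cplx]_n) (V : 'M[Cplx]_(n, 1)).
Variables (Xm1 X0 X1 X2 X3 : 'M[Cplx]_n) (wm1 w0 w1 : 'M[Cplx]_(1, n)).
Hypothesis TP : T *m P = 1%:M.
Hypotheses (Um1 : Xm1 \in unitmx) (U0 : X0 \in unitmx) (U1 : X1 \in unitmx).
Hypothesis Sm1 : RR *m Xm1 + V *m wm1 = - (X1 *m T).
Hypothesis S0 : RR *m X0 + V *m w0 = - (X2 *m T).
Hypothesis S1 : RR *m X1 + V *m w1 = - (X3 *m T).
Hypothesis H0 : X0 *m (1%:M + T) = Xm1 + X1 *m T.
Hypothesis H1 : X2 *m (1%:M + T) = X1 + X3 *m T.

Local Notation Mm1 := (- (X1 *m T *m invmx Xm1)).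
Local Notation M0 := (- (X2 *m T *m invmx X0)).
Local Notation Mm1inv := (- (Xm1 *m P *m invmx X1)).
Local Notation phi w X := ((w *m invmx X *m V) 0 0).

Lemma Mm1_inverse : Mm1 *m Mm1inv = 1%:M.
Proof.
  rewrite mulNmx mulmxN opprK !mulmxA (mulmxKV Um1) -(mulmxA X1 T P) TP mulmx1.
  exact: mulmxV.
Qed.

Lemma M0_rank_one : M0 = Mm1 + V *m (w0 *m invmx X0 - wm1 *m invmx Xm1).
Proof. rewrite (rank_one_form _ _ _ _ _ _ _ U0 S0) (rank_one_form _ _ _ _ _ _ _ Um1 Sm1) mulmxBr. mxlin. Qed.

(* The three-term relation gives M_0 M_{-1}^-1 - 1 = M_0 - M_1,
   where M_1 = -X_3 T X_1^-1. *)
Lemma M0_div_Mm1 : M0 *m Mm1inv - 1%:M = M0 + X3 *m T *m invmx X1.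
Proof.
  have hm1 : Xm1 = X0 *m (1%:M + T) - X1 *m T by rewrite H0; mxlin.
  have h3 : X3 *m T = X2 *m (1%:M + T) - X1 by rewrite H1; mxlin.
  have TPr (Y : 'M[Cplx]_n) : Y *m T *m P = Y by rewrite -mulmxA TP mulmx1.
  have I0r (Y : 'M[Cplx]_n) : Y *m invmx X0 *m X0 = Y by rewrite (mulmxKV U0).
  have I1r (Y : 'M[Cplx]_n) : Y *m X1 *m invmx X1 = Y by rewrite (mulmxK U1).
  rewrite h3 hm1. mxnorm. rewrite !I0r !TPr !I1r (mulmxV U1). mxlin.
Qed.

Lemma rank_one_coefficient :
  ((w0 *m invmx X0 - wm1 *m invmx Xm1) *m (Mm1inv *m V)) 0 0 = phi w0 X0 - phi w1 X1.
Proof.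
  set s := w0 *m invmx X0 - wm1 *m invmx Xm1.
  have E0 : V *m (w0 *m invmx X0) = M0 - RR by rewrite (rank_one_form _ _ _ _ _ _ _ U0 S0); mxlin.
  have E1 : V *m (w1 *m invmx X1) = - (X3 *m T *m invmx X1) - RR
    by rewrite (rank_one_form _ _ _ _ _ _ _ U1 S1); mxlin.
  have Vs : V *m s = M0 - Mm1 by rewrite M0_rank_one; mxlin.
  suff E : s *m (Mm1inv *m V) = w0 *m invmx X0 *m V - w1 *m invmx X1 *m V
    by rewrite E mxE_sub.
  apply: (cancel_column _ V).
  - rewrite (mulmxA V) Vs mulmxA mulmxBl Mm1_inverse M0_div_Mm1.
    rewrite mulmxBr (mulmxA V (w0 *m invmx X0)) (mulmxA V (w1 *m invmx X1)) E0 E1.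
    rewrite !mulmxBl !mulmxDl !mulNmx. mxlin.
  - move=> V0. by rewrite /s V0 !mulmx0 subrr.
Qed.

Theorem bilinear_identity :
  \det X2 * \det Xm1 = - ((phi w1 X1 - phi w0 X0 - 1) * \det X1 * \det X0).
Proof.
  have hdet := det_rank1_update _ _ _ _ _ _ Mm1_inverse M0_rank_one.
  rewrite rank_one_coefficient in hdet.
  have hr0 := det_shift_quotient _ X0 X2 T U0.
  have hrm1 := det_shift_quotient _ Xm1 X1 T Um1.
  have HT : \det T != 0.
  { have [UT _] := mulmx1_unit TP. by rewrite unitmxE unitfE in UT. }
  have E2 : \det X2 = \det M0 * \det X0 / ((-1) ^+ n * \det T).
  { rewrite hr0. field. by rewrite HT signr_eq0. }
  have E1 : \det X1 = \det Mm1 * \det Xm1 / ((-1) ^+ n * \det T).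
  { rewrite hrm1. field. by rewrite HT signr_eq0. }
  rewrite E2 E1 hdet. field. by rewrite HT signr_eq0.
Qed.

End BilinearIdentity.

Lemma exp_partial_comm n (P X : mat) k :
  GRing.comm (toM n.+1 n.+1 P) (toM n.+1 n.+1 X) ->
  GRing.comm (toM n.+1 n.+1 P) (toM n.+1 n.+1 (exp_partial n.+1 X k)).
Proof.
  move=> H. elim: k => [|k IH] /=; first by rewrite toM_zero; exact: commr0.
  rewrite toM_madd toM_mscal toM_mpow. apply: commrD => //.
  rewrite /GRing.comm -scalerAr -scalerAl. congr (_ *: _). exact: commrX.
Qed.

Lemma mexp_comm n (P X E : mat) : is_mexp n.+1 X E ->
  GRing.comm (toM n.+1 n.+1 P) (toM n.+1 n.+1 X) ->
  GRing.comm (toM n.+1 n.+1 P) (toM n.+1 n.+1 E).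
Proof.
  move=> HE HX. apply/matrixP => i j.
  rewrite /GRing.comm -!mulmxE -!toM_mmul !toME.
  have /ltP Hi := ltn_ord i. have /ltP Hj := ltn_ord j.
  apply: (ccv_unique (fun k => mmul n.+1 P (exp_partial n.+1 X k) i j)).
  - apply: ccv_mmul_l => l Hl. exact: HE.
  - apply: (ccv_ext (fun k => mmul n.+1 (exp_partial n.+1 X k) P i j)).
    + move=> k. have := exp_partial_comm n P X k HX.
      rewrite /GRing.comm -!mulmxE -!toM_mmul => /(congr1 (fun M0 : 'M[Cplx]_n.+1 => M0 i j)).
      by rewrite !toME.
    + apply: ccv_mmul_r => l Hl. exact: HE.
Qed.

Section IntegerPowers.
Variables (Rg : nzRingType) (p q : Rg).
Hypotheses (pq : p * q = 1) (qp : q * p = 1).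

Definition zpow (z : Z) : Rg :=
  if Z.leb 0 z then p ^+ Z.to_nat z else q ^+ Z.to_nat (Z.opp z).

Lemma zpow_mulp z : zpow z * p = zpow (Z.add z 1).
Proof.
  rewrite /zpow. case: (Z.leb_spec 0 z) => Hz.
  - have -> : Z.leb 0 (Z.add z 1) = true by apply/Z.leb_le; lia.
    have -> : Z.to_nat (Z.add z 1) = (Z.to_nat z).+1 by lia.
    by rewrite exprSr.
  - have [k Hk] : exists k, Z.to_nat (Z.opp z) = k.+1 by exists (Z.to_nat (Z.opp z)).-1; lia.
    rewrite Hk exprSr -mulrA qp mulr1.
    case: (Z.leb_spec 0 (z + 1)) => Hz1.
    + have Hk0 : k = 0%N by lia. subst k.
      have -> : Z.to_nat (Z.add z 1) = 0%N by lia.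
      by rewrite !expr0.
    + by have -> : Z.to_nat (Z.opp (Z.add z 1)) = k by lia.
Qed.

Lemma zpow_mulq z : zpow z * q = zpow (Z.sub z 1).
Proof.
  rewrite /zpow. case: (Z.leb_spec 0 (z - 1)) => Hz.
  - have -> : Z.leb 0 z = true by apply/Z.leb_le; lia.
    have -> : Z.to_nat z = (Z.to_nat (Z.sub z 1)).+1 by lia.
    by rewrite exprSr -mulrA pq mulr1.
  - case: (Z.leb_spec 0 z) => Hz0.
    + have -> : Z.to_nat z = 0%N by lia.
      have -> : Z.to_nat (Z.opp (Z.sub z 1)) = 1%N by lia.
      by rewrite expr0 mul1r expr1.
    + have -> : Z.to_nat (Z.opp (Z.sub z 1)) = (Z.to_nat (Z.opp z)).+1 by lia.
      by rewrite exprSr.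
Qed.

Lemma comm_zpow z : GRing.comm p (zpow z).
Proof.
  have cpq : GRing.comm p q by rewrite /GRing.comm pq qp.
  rewrite /zpow; case: ifP => _; apply: commrX; [exact: commr_refl|exact: cpq].
Qed.

End IntegerPowers.
Arguments zpow {Rg}.

Section LotkaVolterraLattice.
Variables (M n : nat) (P Pinv Rt A B Cm D U V : mat) (E : R -> mat).
Local Notation N := n.+1.
Hypothesis HP : is_inverse N P Pinv.
Hypothesis HC : meq N N (madd (mmul M (mmul 1 V (mtr U)) Cm) (mmul N Rt A)) (mopp (mmul N A Pinv)).
Hypothesis HD : meq N N (madd (mmul M (mmul 1 V (mtr U)) D) (mmul N Rt B)) (mopp (mmul N B P)).
Hypothesis HE : forall t : R, is_mexp N (mscal (Cr t) (madd Pinv (mopp P))) (E t).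

Definition Pm : 'M[Cplx]_N := toM N N P.
Definition Tm : 'M[Cplx]_N := toM N N Pinv.
Definition Rm : 'M[Cplx]_N := toM N N Rt.
Definition Am : 'M[Cplx]_N := toM N N A.
Definition Bm : 'M[Cplx]_N := toM N N B.
Definition Cmx : 'M[Cplx]_(M, N) := toM M N Cm.
Definition Dm : 'M[Cplx]_(M, N) := toM M N D.
Definition Um : 'M[Cplx]_(M, 1) := toM M 1 U.
Definition Vm : 'M[Cplx]_(N, 1) := toM N 1 V.
Definition Em (t : R) : 'M[Cplx]_N := toM N N (E t).

Lemma P_T : Pm * Tm = 1.
Proof. have [H _] := HP. move/meq_toM: H. by rewrite toM_mmul toM_mid. Qed.
Lemma T_P : Tm * Pm = 1.
Proof. have [_ H] := HP. move/meq_toM: H. by rewrite toM_mmul toM_mid. Qed.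

Lemma toM_mpowZ z : toM N N (mpowZ N P Pinv z) = zpow Pm Tm z.
Proof. rewrite /zpow; case: z => [|p|p] /=; by rewrite ?toM_mid ?expr0 ?toM_mpow. Qed.

Lemma P_Em t : GRing.comm Pm (Em t).
Proof.
  apply: mexp_comm; first exact: HE.
  rewrite toM_mscal toM_madd toM_mopp /GRing.comm -scalerAr -scalerAl. congr (_ *: _).
  apply: commrD; last exact/commrN/commr_refl.
  by rewrite /GRing.comm P_T T_P.
Qed.

Lemma T_Em t : GRing.comm Tm (Em t).
Proof.
  rewrite /GRing.comm -[Tm * Em t]mulr1 -P_T mulrA -(mulrA Tm (Em t) Pm) -P_Em.
  by rewrite mulrA T_P mul1r.
Qed.

Lemma Em_deriv t : mderiv Em t ((Tm - Pm) * Em t).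
Proof.
  move=> i j.
  have /ltP Hi := ltn_ord i. have /ltP Hj := ltn_ord j.
  apply: (cderiv_ext (fun s => E s i j)); first by move=> s; rewrite /Em toME.
  have -> : ((Tm - Pm) * Em t) i j = mmul N (madd Pinv (mopp P)) (E t) i j.
  { by rewrite /Em -mulmxE -toM_mopp -toM_madd -toM_mmul toME. }
  exact: mexp_deriv.
Qed.

Definition K z t : 'M[Cplx]_N := zpow Pm Tm z * Em t.

Lemma K_mulT z t : K z t *m Tm = K (Z.sub z 1) t.
Proof. by rewrite mulmxE /K -mulrA -T_Em mulrA zpow_mulq // P_T. Qed.

Lemma P_mulK z t : Pm *m K z t = K (Z.add z 1) t.
Proof. by rewrite mulmxE /K mulrA comm_zpow ?P_T ?T_P // -zpow_mulp // T_P. Qed.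

Lemma K_deriv z t : mderiv (K z) t (K (Z.sub z 1) t - K (Z.add z 1) t).
Proof.
  apply: mderiv_eq; last exact: (mderiv_lmul _ _ _ (zpow Pm Tm z) Em t _ (Em_deriv t)).
  by rewrite mulmxE mulrA mulrBr zpow_mulq ?zpow_mulp ?P_T ?T_P // mulrBl.
Qed.

Definition X z t : 'M[Cplx]_N := Am + Bm *m K z t.
Definition Y z t : 'M[Cplx]_(M, N) := Cmx + Dm *m K z t.
Definition w z t : 'M[Cplx]_(1, N) := Um^T *m Y z t.
Definition phiK z t : Cplx := (w z t *m invmx (X z t) *m Vm) 0 0.
Definition tau z t : Cplx := \det (X z t).

Lemma X_deriv z t : mderiv (X z) t (X (Z.sub z 1) t - X (Z.add z 1) t).
Proof.
  have := mderiv_add _ _ _ _ t _ _ (mderiv_const Am t) (mderiv_lmul _ _ _ Bm (K z) t _ (K_deriv z t)).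
  apply: mderiv_eq. rewrite /X add0r mulmxBr. mxlin.
Qed.

Lemma constraint_C : Vm *m (Um^T *m Cmx) = - (Am *m Tm) - Rm *m Am.
Proof.
  move/meq_toM: HC. rewrite toM_madd toM_mopp !toM_mmul toM_mtr -/Vm -/Um -/Cmx -/Rm -/Am -/Tm.
  move=> H. rewrite mulmxA -H. mxlin.
Qed.

Lemma constraint_D (Z : 'M[Cplx]_N) :
  Vm *m (Um^T *m (Dm *m Z)) = - (Bm *m (Pm *m Z)) - Rm *m (Bm *m Z).
Proof.
  move/meq_toM: HD. rewrite toM_madd toM_mopp !toM_mmul toM_mtr -/Vm -/Um -/Dm -/Rm -/Bm -/Pm.
  move=> H. have QD : Vm *m Um^T *m Dm = - (Bm *m Pm) - Rm *m Bm by rewrite -H; mxlin.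
  by rewrite !mulmxA QD mulmxBl mulNmx.
Qed.

Lemma X_shift_rel z t : Rm *m X z t + Vm *m w z t = - (X (Z.add z 2) t *m Tm).
Proof.
  rewrite /X /w /Y !mulmxDr !mulmxDl constraint_C constraint_D P_mulK.
  rewrite -(mulmxA Bm (K (Z.add z 2) t) Tm) K_mulT.
  have -> : Z.sub (Z.add z 2) 1 = Z.add z 1 by lia.
  mxlin.
Qed.

Lemma X_three_term z t : X (Z.add z 1) t *m (1%:M + Tm) = X z t + X (Z.add z 2) t *m Tm.
Proof.
  rewrite /X !mulmxDr !mulmxDl !mulmx1.
  rewrite -(mulmxA Bm (K (Z.add z 1) t) Tm) -(mulmxA Bm (K (Z.add z 2) t) Tm) !K_mulT.
  have -> : Z.sub (Z.add z 2) 1 = Z.add z 1 by lia.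
  have -> : Z.sub (Z.add z 1) 1 = z by lia.
  mxlin.
Qed.

Lemma X_deriv_rel z t :
  X (Z.sub z 1) t - X (Z.add z 1) t = Rm *m X z t + X z t *m Tm + Vm *m w z t.
Proof.
  have -> : Rm *m X z t + X z t *m Tm + Vm *m w z t =
     (Rm *m X z t + Vm *m w z t) + X z t *m Tm by mxlin.
  rewrite X_shift_rel /X !mulmxDl.
  rewrite -(mulmxA Bm (K z t) Tm) -(mulmxA Bm (K (Z.add z 2) t) Tm) !K_mulT.
  have -> : Z.sub (Z.add z 2) 1 = Z.add z 1 by lia.
  mxlin.
Qed.

Lemma tau_deriv z t : X z t \in unitmx ->
  cderiv (tau z) t (tau z t * (\tr Rm + \tr Tm + phiK z t)).
Proof.
  move=> HU. apply: cderiv_eq; last exact: (det_deriv_unit _ (X z) t _ (X_deriv z t) HU).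
  rewrite /tau /phiK X_deriv_rel. move: HU (w z t). move: (X z t) => Xt HU wt.
  rewrite !mulmxDl !mxtraceD. congr (_ * _).
  rewrite (mulmxK HU) (mxtrace_mulC (Xt *m Tm)) (mulmxA (invmx Xt) Xt Tm) (mulVmx HU) mul1mx.
  by rewrite -(mulmxA Vm) (mxtrace_mulC Vm) /mxtrace big_ord1.
Qed.

Lemma tau_bilinear z t : (forall k, X k t \in unitmx) ->
  tau (Z.add z 2) t * tau (Z.sub z 1) t =
  - ((phiK (Z.add z 1) t - phiK z t - 1) * tau (Z.add z 1) t * tau z t).
Proof.
  move=> HU.
  have Sm1 := X_shift_rel (Z.sub z 1) t.
  have S1 := X_shift_rel (Z.add z 1) t.
  have H0 := X_three_term (Z.sub z 1) t.
  have H1 := X_three_term (Z.add z 1) t.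
  rewrite (_ : Z.add (Z.sub z 1) 2 = Z.add z 1) in Sm1; last by lia.
  rewrite (_ : Z.add (Z.add z 1) 2 = Z.add z 3) in S1 H1; last by lia.
  rewrite (_ : Z.add (Z.sub z 1) 1 = z) in H0; last by lia.
  rewrite (_ : Z.add (Z.sub z 1) 2 = Z.add z 1) in H0; last by lia.
  rewrite (_ : Z.add (Z.add z 1) 1 = Z.add z 2) in H1; last by lia.
  have TP : Tm *m Pm = 1%:M by rewrite mulmxE T_P.
  exact: (bilinear_identity _ _ _ _ _ _ _ _ _ _ _ _ _ TP (HU _) (HU _) (HU _) Sm1 (X_shift_rel z t) S1 H0 H1).
Qed.

Lemma tau_neq0 z t : X z t \in unitmx -> tau z t != 0.
Proof. by rewrite unitmxE unitfE. Qed.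

Definition tau_quotient z t : Cplx :=
  - (tau (Z.add z 2) t * tau (Z.sub z 1) t) / (tau (Z.add z 1) t * tau z t).

Lemma a_tau_quotient z t : (forall k, X k t \in unitmx) ->
  phiK (Z.add z 1) t - phiK z t - 1 = tau_quotient z t.
Proof.
  move=> HU. rewrite /tau_quotient tau_bilinear //.
  field. by rewrite !tau_neq0.
Qed.

Variables (Xinv : Z -> R -> mat) (lo hi : R).
Hypothesis HX : forall (z : Z) (t : R), Rlt lo t /\ Rlt t hi ->
  is_inverse N (Xmat N A B P Pinv E z t) (Xinv z t).

Lemma toM_Xmat z t : toM N N (Xmat N A B P Pinv E z t) = X z t.
Proof. by rewrite /Xmat toM_madd !toM_mmul toM_mpowZ. Qed.

Lemma toM_Ymat z t : toM M N (Ymat N Cm D P Pinv E z t) = Y z t.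
Proof. by rewrite /Ymat toM_madd !toM_mmul toM_mpowZ. Qed.

Lemma X_unit_inv z t : Rlt lo t /\ Rlt t hi ->
  X z t \in unitmx /\ toM N N (Xinv z t) = invmx (X z t).
Proof.
  move=> /(HX z) [H _]. move/meq_toM: H. rewrite toM_mmul toM_mid toM_Xmat => H.
  have [U1 _] := mulmx1_unit H. split => //.
  by rewrite -[toM N N (Xinv z t)](mulKmx U1) H mulmx1.
Qed.

Lemma aseq_phiK z t : Rlt lo t /\ Rlt t hi ->
  aseq M N U V Cm D P Pinv E Xinv z t = phiK (Z.add z 1) t - phiK z t - 1.
Proof.
  move=> Ht.
  have phi_eq k : phi M N U V Cm D P Pinv E Xinv k t = phiK k t.
  { rewrite /phi /phiK /w -(toME 1 1 _ 0 0) !toM_mmul toM_mtr toM_Ymat.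
    by rewrite (X_unit_inv k t Ht).2 !mulmxA. }
  by rewrite /aseq !phi_eq.
Qed.

Theorem lotka_volterra_lattice z t : Rlt lo t /\ Rlt t hi ->
  cderiv (aseq M N U V Cm D P Pinv E Xinv z) t
    (Csub (Cmul (aseq M N U V Cm D P Pinv E Xinv (Z.add z 1) t) (aseq M N U V Cm D P Pinv E Xinv z t))
          (Cmul (aseq M N U V Cm D P Pinv E Xinv z t) (aseq M N U V Cm D P Pinv E Xinv (Z.sub z 1) t))).
Proof.
  move=> Ht.
  have HU k : X k t \in unitmx := (X_unit_inv k t Ht).1.
  have Hneq k : tau k t <> 0 by apply/eqP; exact: tau_neq0.
  apply: (cderiv_loc (tau_quotient z) _ t lo hi _ Ht).
  { move=> s Hs. rewrite aseq_phiK // a_tau_quotient // => k. exact: (X_unit_inv k s Hs).1. }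
  apply: cderiv_eq (cderiv_tau_quotient _ _ _ _ _ _ _ _ _ t (Hneq _) (Hneq _)
    (tau_deriv _ _ (HU _)) (tau_deriv _ _ (HU _)) (tau_deriv _ _ (HU _)) (tau_deriv _ _ (HU _))).
  rewrite !aseq_phiK // (_ : Z.add (Z.add z 1) 1 = Z.add z 2); last by lia.
  rewrite (_ : Z.add (Z.sub z 1) 1 = z); last by lia.
  change (tau_quotient z t * (phiK (Z.add z 2) t + phiK (Z.sub z 1) t - (phiK (Z.add z 1) t + phiK z t))
    = (phiK (Z.add z 2) t - phiK (Z.add z 1) t - 1) * (phiK (Z.add z 1) t - phiK z t - 1)
      - (phiK (Z.add z 1) t - phiK z t - 1) * (phiK z t - phiK (Z.sub z 1) t - 1)).
  rewrite -a_tau_quotient //. ring.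
Qed.

End LotkaVolterraLattice.
End LotkaVolterra.

Theorem mainTheorem8
  (M N : nat) (HM : (1 <= M)%nat) (HN : (1 <= N)%nat)
  (P Pinv Rt A B Cm D U V : mat) (E : R -> mat) (Xinv : Z -> R -> mat)
  (lo hi : R) :
  is_inverse N P Pinv ->
  (* Q C + R A = - A P^{-1},  Q D + R B = - B P, with Q = V U^T *)
  meq N N (madd (mmul M (mmul 1 V (mtr U)) Cm) (mmul N Rt A)) (mopp (mmul N A Pinv)) ->
  meq N N (madd (mmul M (mmul 1 V (mtr U)) D) (mmul N Rt B)) (mopp (mmul N B P)) ->
  (forall t : R, is_mexp N (mscal (Cr t) (madd Pinv (mopp P))) (E t)) ->
  lo < hi ->
  (forall (n : Z) (t : R), lo < t < hi ->
     is_inverse N (Xmat N A B P Pinv E n t) (Xinv n t)) ->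
  forall (n : Z) (t : R), lo < t < hi ->
    cderiv (aseq M N U V Cm D P Pinv E Xinv n) t
      (Csub (Cmul (aseq M N U V Cm D P Pinv E Xinv (n + 1)%Z t)
                  (aseq M N U V Cm D P Pinv E Xinv n t))
            (Cmul (aseq M N U V Cm D P Pinv E Xinv n t)
                  (aseq M N U V Cm D P Pinv E Xinv (n - 1)%Z t))).
Proof.
  intros HP HC HD HE _ HX n t Ht.
  destruct N as [|N']; [lia|].
  exact (LotkaVolterra.lotka_volterra_lattice M N' P Pinv Rt A B Cm D U V E HP HC HD HE
           Xinv lo hi HX n t Ht).
Qed.
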